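(* Let the contents be $\mathcal{C}=\{1,\dots,C\}$ with normalized popularities $\hat\nu_1\ge\hat\nu_2\ge\dots\ge\hat\nu_C>0$, $\sum_c\hat\nu_c=1$, let $\rho>0$, $\rho_c=\rho\hat\nu_c$, and let $M\ge1$ be an integer. Consider the linear program (OPT 2) $$\max_{\tilde{\mathbf m},\boldsymbol\lambda,\mathbf x}\ \sum_{c\in\mathcal{C}}(\rho_c\tilde m_c+x_c)$$ subject to: for all $c$, $0\le\tilde m_c\le1$, $0\le\lambda_c\le\tilde m_c$, $0\le x_c\le\lambda_c$, $x_c\le\rho_c(1-\tilde m_c)$; and $\sum_c\tilde m_c=M$, $\sum_c\lambda_c\le1$. Let $c^*$ be the index such that $\sum_{c=M}^{c^*}\frac{\rho_c}{1+\rho_c}\le1$ but $\sum_{c=M}^{c^*+1}\frac{\rho_c}{1+\rho_c}>1$. Then the following is an optimal solution of OPT 2: (i) for $1\le c\le M-1$: $\tilde m_c=1$, $\lambda_c=x_c=0$; (ii) for $M\le c\le c^*$: $\tilde m_c=\lambda_c=x_c=\rho_c/(1+\rho_c)$; (iii) for $c=c^*+1$: $\tilde m_c=\lambda_c=x_c=1-\sum_{c'=M}^{c^*}\tilde m_{c'}$; (iv) for $c^*+2\le c\le C$: $\tilde m_c=\lambda_c=x_c=0$.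
   Context: In the pure peer-to-peer setting, $\tilde m_c$ is the fraction of boxes caching content $c$, $\lambda_c$ the fraction of total upload bandwidth devoted to content $c$, and $\rho_c$ the (normalized) traffic load of requests for $c$. *)

From HB Require Import structures.
From mathcomp Require Import all_boot all_order all_algebra.
Set Implicit Arguments. Unset Strict Implicit. Unset Printing Implicit Defensive.
Import Order.TTheory GRing.Theory Num.Theory.
Local Open Scope ring_scope.

Definition rhoc {R : realFieldType} (rho : R) (nu : nat -> R) (c : nat) : R :=
  rho * nu c.

Definition opt2_feasible {R : realFieldType} (C : nat) (rho : R) (nu : nat -> R)
  (M : nat) (m lam x : nat -> R) : Prop :=
  (forall c : nat, (1 <= c <= C)%N ->
     [/\ 0 <= m c /\ m c <= 1, 0 <= lam c /\ lam c <= m c,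
         0 <= x c, x c <= lam c & x c <= rhoc rho nu c * (1 - m c)])
  /\ \sum_(1 <= c < C.+1) m c = M%:R
  /\ \sum_(1 <= c < C.+1) lam c <= 1.

Definition opt2_obj {R : realFieldType} (C : nat) (rho : R) (nu : nat -> R)
  (m x : nat -> R) : R :=
  \sum_(1 <= c < C.+1) (rhoc rho nu c * m c + x c).

Definition opt2_optimal {R : realFieldType} (C : nat) (rho : R) (nu : nat -> R)
  (M : nat) (m lam x : nat -> R) : Prop :=
  opt2_feasible C rho nu M m lam x /\
  forall m' lam' x' : nat -> R, opt2_feasible C rho nu M m' lam' x' ->
    opt2_obj C rho nu m' x' <= opt2_obj C rho nu m x.

Definition sol_m {R : realFieldType} (rho : R) (nu : nat -> R) (M cs : nat)
  (c : nat) : R :=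
  if (c < M)%N then 1
  else if (c <= cs)%N then rhoc rho nu c / (1 + rhoc rho nu c)
  else if c == cs.+1 then
    1 - \sum_(M <= c' < cs.+1) rhoc rho nu c' / (1 + rhoc rho nu c')
  else 0.

(* lambda_c = x_c of the proposed solution. *)
Definition sol_lx {R : realFieldType} (rho : R) (nu : nat -> R) (M cs : nat)
  (c : nat) : R :=
  if (c < M)%N then 0 else sol_m rho nu M cs c.

(** Weak LP duality with an explicit dual certificate.  Price the bandwidth
    constraint [\sum lambda <= 1] at [mu = (1 + rho_(c*+1)) / (1 + rho_M)] and
    the cache constraint [\sum m = M] at [T = 1 + rho_(c*+1) - mu], so that
    [mu + T = 1 + rho_(c*+1)] and, since [rho] is nonincreasing,
    [mu (1 + rho_c)] is [>= 1 + rho_(c*+1)] for [c <= M] and [<=] for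
    [c >= M].  For each content [c] there is then a constant [K c] with
    [rho_c m + x <= K c + mu lambda + T m] on the whole box of per-content
    constraints, with equality at the proposed solution (complementary
    slackness).  Summing over [c] bounds every feasible objective by
    [\sum K + mu + T M], which the proposed solution attains. *)

From mathcomp Require Import all_boot all_order all_algebra.
From mathcomp Require Import ring lra zify.
Import Order.TTheory GRing.Theory Num.Theory.
Local Open Scope ring_scope.

Definition opt2_box {R : realFieldType} (r m lam x : R) : Prop :=
  [/\ 0 <= m /\ m <= 1, 0 <= lam /\ lam <= m, 0 <= x, x <= lam & x <= r * (1 - m)].

Lemma opt2_optimal_of_dual (R : realFieldType) (C : nat) (rho : R) (nu : nat -> R)
    (M : nat) (m lam x K : nat -> R) (mu T : R) :
  0 <= mu ->
  opt2_feasible C rho nu M m lam x ->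
  \sum_(1 <= c < C.+1) lam c = 1 ->
  (forall c, (1 <= c <= C)%N -> forall a b d : R, opt2_box (rhoc rho nu c) a b d ->
     rhoc rho nu c * a + d <= K c + mu * b + T * a) ->
  (forall c, (1 <= c <= C)%N ->
     rhoc rho nu c * m c + x c = K c + mu * lam c + T * m c) ->
  opt2_optimal C rho nu M m lam x.
Proof.
move=> mu_ge0 feas lam_sum dual_bound dual_eq.
split=> // m' lam' x' [box [m'_sum lam'_sum]].
have dual_split (n l : nat -> R) : \sum_(1 <= c < C.+1) (K c + mu * l c + T * n c) =
    \sum_(1 <= c < C.+1) K c + mu * \sum_(1 <= c < C.+1) l c
    + T * \sum_(1 <= c < C.+1) n c.
  by rewrite !big_split /= !mulr_sumr.
have [_ [m_sum _]] := feas.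
rewrite /opt2_obj.
apply: (@le_trans _ _ (\sum_(1 <= c < C.+1) (K c + mu * lam' c + T * m' c))).
  rewrite big_nat_cond [leRHS]big_nat_cond; apply: ler_sum => c /andP[hc _].
  by apply: dual_bound; [lia | apply: box; lia].
have -> : \sum_(1 <= c < C.+1) (rhoc rho nu c * m c + x c) =
    \sum_(1 <= c < C.+1) (K c + mu * lam c + T * m c).
  rewrite big_nat_cond [RHS]big_nat_cond; apply: eq_bigr => c /andP[hc _].
  by rewrite dual_eq //; lia.
by rewrite !dual_split m'_sum m_sum lam_sum lerD2r lerD2l ler_wpM2l.
Qed.

(* In the three bounds below the slack is a nonnegative combination of the
   products [e1], [e2], [e3] of nonnegative factors. *)
Lemma content_bound_cached {R : realFieldType} {r r' mu m lam x : R} :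
  0 <= mu -> mu <= 1 -> 1 + r' <= mu * (1 + r) -> m <= 1 -> x <= lam ->
  x <= r * (1 - m) ->
  r * m + x <= r - (1 + r' - mu) + mu * lam + (1 + r' - mu) * m.
Proof.
move=> mu_ge0 mu_le1 mu_gap m_le1 x_le_lam x_le_demand.
have e1 : 0 <= (1 - mu) * (r * (1 - m) - x).
  by apply: mulr_ge0; rewrite ?subr_ge0 //; lra.
have e2 : 0 <= mu * (lam - x) by apply: mulr_ge0; rewrite ?subr_ge0 //; lra.
have e3 : 0 <= (mu * (1 + r) - (1 + r')) * (1 - m).
  by apply: mulr_ge0; rewrite ?subr_ge0 //; lra.
nra.
Qed.

Lemma content_bound_partial {R : realFieldType} {r r' mu m lam x : R} :
  0 < r -> 0 <= r' -> r' <= r -> mu * (1 + r) <= 1 + r' -> lam <= m -> x <= lam ->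
  x <= r * (1 - m) ->
  r * m + x <= r * (r - r') / (1 + r) + mu * lam + (1 + r' - mu) * m.
Proof.
move=> r_gt0 r'_ge0 r'_le_r mu_gap lam_le_m x_le_lam x_le_demand.
have e1 : 0 <= (1 + r') * (lam - x) by apply: mulr_ge0; rewrite ?subr_ge0 //; lra.
have e2 : 0 <= (r - r') * (r * (1 - m) - x).
  by apply: mulr_ge0; rewrite ?subr_ge0 //; lra.
have e3 : 0 <= ((1 + r') - mu * (1 + r)) * (m - lam).
  by apply: mulr_ge0; rewrite ?subr_ge0 //; lra.
have r1_gt0 : 0 < 1 + r by lra.
rewrite -(ler_pM2r r1_gt0) !mulrDl [_ / _ * _]mulfVK ?gt_eqF //.
nra.
Qed.

Lemma content_bound_uncached {R : realFieldType} {r r' mu m lam x : R} :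
  mu <= 1 -> r <= r' -> 0 <= m -> lam <= m -> x <= lam ->
  r * m + x <= 0 + mu * lam + (1 + r' - mu) * m.
Proof.
move=> mu_le1 r_le_r' m_ge0 lam_le_m x_le_lam.
have e1 : 0 <= (r' - r) * m by apply: mulr_ge0; rewrite ?subr_ge0 //; lra.
have e2 : 0 <= (1 - mu) * (m - lam) by apply: mulr_ge0; rewrite ?subr_ge0 //; lra.
lra.
Qed.

Lemma ratio1D_ge0 {R : realFieldType} (r : R) : 0 <= r -> 0 <= r / (1 + r).
Proof. by move=> r_ge0; rewrite divr_ge0 // addr_ge0. Qed.

Lemma ratio1D_lt1 {R : realFieldType} (r : R) : 0 <= r -> r / (1 + r) < 1.
Proof. by move=> r_ge0; rewrite ltr_pdivrMr ?mul1r ?ltrDr //; lra. Qed.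

Lemma mulr_1Bratio1D {R : realFieldType} (r : R) : 0 <= r ->
  r * (1 - r / (1 + r)) = r / (1 + r).
Proof. by move=> r_ge0; field; lra. Qed.

Lemma sum_nat_split_pivot (V : nmodType) (C M cs : nat) (f : nat -> V) :
  (1 <= M <= cs)%N -> (cs < C)%N ->
  \sum_(1 <= c < C.+1) f c = \sum_(1 <= c < M) f c + \sum_(M <= c < cs.+1) f c
     + f cs.+1 + \sum_(cs.+2 <= c < C.+1) f c.
Proof.
move=> M_bounds cs_lt_C.
rewrite (@big_cat_nat _ _ _ M) /=; [|lia|lia].
rewrite (@big_cat_nat _ _ _ cs.+1 M) /=; [|lia|lia].
by rewrite (@big_cat_nat _ _ _ cs.+2 cs.+1) /= ?big_nat1 ?addrA.
Qed.

Section SolutionValues.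
Variables (R : realFieldType) (rho : R) (nu : nat -> R) (M cs : nat).

Lemma sol_m_head c : (c < M)%N -> sol_m rho nu M cs c = 1.
Proof. by rewrite /sol_m => ->. Qed.

Lemma sol_m_mid c : (M <= c <= cs)%N ->
  sol_m rho nu M cs c = rhoc rho nu c / (1 + rhoc rho nu c).
Proof. by move=> /andP[Mc ccs]; rewrite /sol_m ltnNge Mc ccs. Qed.

Lemma sol_m_pivot : (M <= cs.+1)%N ->
  sol_m rho nu M cs cs.+1 =
    1 - \sum_(M <= c < cs.+1) rhoc rho nu c / (1 + rhoc rho nu c).
Proof. by move=> Mcs; rewrite /sol_m ltnNge Mcs ltnn eqxx. Qed.

Lemma sol_m_tail c : (M <= c)%N -> (cs.+1 < c)%N -> sol_m rho nu M cs c = 0.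
Proof.
move=> Mc csc; rewrite /sol_m ltnNge Mc /= leqNgt (ltnW csc) /=.
by rewrite gtn_eqF.
Qed.

Lemma sol_lx_head c : (c < M)%N -> sol_lx rho nu M cs c = 0.
Proof. by rewrite /sol_lx => ->. Qed.

Lemma sol_lx_eq_m c : (M <= c)%N -> sol_lx rho nu M cs c = sol_m rho nu M cs c.
Proof. by rewrite /sol_lx ltnNge => ->. Qed.

End SolutionValues.

Section Opt2Solution.
Variables (R : realFieldType) (C : nat) (nu : nat -> R) (rho : R) (M cs : nat).
Hypotheses (nu_noninc : forall c : nat, (1 <= c)%N -> (c < C)%N -> nu c.+1 <= nu c)
  (nu_gt0 : forall c : nat, (1 <= c <= C)%N -> 0 < nu c)
  (rho_gt0 : 0 < rho) (M_ge1 : (1 <= M)%N) (cs_lt_C : (cs < C)%N).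

Local Notation r := (rhoc rho nu).
Local Notation ratio c := (r c / (1 + r c)).
Local Notation S := (\sum_(M <= c < cs.+1) ratio c).

Hypotheses (S_le1 : S <= 1) (S_pivot_gt1 : 1 < \sum_(M <= c < cs.+2) ratio c).

Lemma rhoc_gt0 c : (1 <= c <= C)%N -> 0 < r c.
Proof. by move=> hc; rewrite mulr_gt0 ?nu_gt0. Qed.

Lemma rhoc_noninc c c' : (1 <= c)%N -> (c <= c')%N -> (c' <= C)%N -> r c' <= r c.
Proof.
move=> c_ge1 cc' c'_le_C.
pose D := [pred i | (1 <= i <= C)%N].
have step i : i \in D -> i.+1 \in D -> r i.+1 <= r i.
  by rewrite !inE => /andP[i_ge1 _] /andP[_ iC]; rewrite ler_pM2l ?nu_noninc.
apply: (@homo_leq_in _ D r (fun a b => b <= a)) => //; rewrite ?inE.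
- by move=> a b e ba eb; exact: le_trans eb ba.
- by move=> a b; rewrite !inE => ha hb k; rewrite inE; lia.
- by lia.
- by lia.
Qed.

Lemma M_le_cs : (M <= cs)%N.
Proof.
rewrite leqNgt; apply/negP => cs_lt_M.
have ratio_lt1 : ratio cs.+1 < 1 by apply/ratio1D_lt1/ltW/rhoc_gt0; lia.
move: S_pivot_gt1; case: (ltnP cs.+1 M) => [pivot_lt_M | M_le_pivot].
  by rewrite big_geq // ltr10.
have -> : M = cs.+1 by lia.
by rewrite big_nat1 ltNge (ltW ratio_lt1).
Qed.

Lemma ratio_ge0 c : (1 <= c <= C)%N -> 0 <= ratio c.
Proof. by move=> hc; apply/ratio1D_ge0/ltW/rhoc_gt0. Qed.

Lemma head_sum_ge0 : 0 <= S.
Proof.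
rewrite big_nat_cond sumr_ge0 // => c /andP[hc _].
by apply: ratio_ge0; have := M_le_cs; lia.
Qed.

Lemma pivot_demand : 1 - S <= r cs.+1 * S.
Proof.
have r'_gt0 : 0 < r cs.+1 by apply: rhoc_gt0; lia.
have : 1 - S < ratio cs.+1.
  by move: S_pivot_gt1; rewrite big_nat_recr /=; [lra | have := M_le_cs; lia].
rewrite ltr_pdivlMr; last lra.
by move=> lt; lra.
Qed.

Local Notation m_sol := (sol_m rho nu M cs).
Local Notation lx_sol := (sol_lx rho nu M cs).

Lemma sol_m_sum : \sum_(1 <= c < C.+1) m_sol c = M%:R.
Proof.
have M_cs := M_le_cs.
rewrite (@sum_nat_split_pivot _ C M cs) ?M_ge1 //.
rewrite (@eq_big_nat _ _ _ 1 M _ (fun=> 1)); last first.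
  by move=> c hc; apply: sol_m_head; lia.
rewrite (@eq_big_nat _ _ _ M cs.+1 _ (fun c => ratio c)); last first.
  by move=> c hc; apply: sol_m_mid; lia.
rewrite (@eq_big_nat _ _ _ cs.+2 C.+1 _ (fun=> 0)); last first.
  by move=> c hc; apply: sol_m_tail; lia.
rewrite sol_m_pivot ?(leqW M_cs) // sumr_const_nat big1_eq addr0.
by rewrite -[in RHS](subnK M_ge1) natrD; lra.
Qed.

Lemma sol_lx_sum : \sum_(1 <= c < C.+1) lx_sol c = 1.
Proof.
have M_cs := M_le_cs.
rewrite (@sum_nat_split_pivot _ C M cs) ?M_ge1 //.
rewrite (@eq_big_nat _ _ _ 1 M _ (fun=> 0)); last first.
  by move=> c hc; apply: sol_lx_head; lia.
rewrite (@eq_big_nat _ _ _ M cs.+1 _ (fun c => ratio c)); last first.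
  by move=> c hc; rewrite sol_lx_eq_m ?sol_m_mid //; lia.
rewrite (@eq_big_nat _ _ _ cs.+2 C.+1 _ (fun=> 0)); last first.
  by move=> c hc; rewrite sol_lx_eq_m ?sol_m_tail //; lia.
rewrite sol_lx_eq_m ?sol_m_pivot ?(leqW M_cs) // !big1_eq.
by rewrite add0r addr0 addrC subrK.
Qed.

Lemma sol_feasible : opt2_feasible C rho nu M m_sol lx_sol lx_sol.
Proof.
split; last by rewrite sol_m_sum sol_lx_sum.
move=> c hc; have r_gt0 := rhoc_gt0 _ hc; have M_cs := M_le_cs.
case: (ltnP c M) => [c_lt_M | M_le_c].
  by rewrite sol_m_head ?sol_lx_head // subrr mulr0; split; lra.
rewrite sol_lx_eq_m //; case: (leqP c cs) => [c_le_cs | cs_lt_c].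
  rewrite sol_m_mid ?M_le_c // mulr_1Bratio1D ?(ltW r_gt0) //.
  have ratio_lt1 : ratio c < 1 by apply/ratio1D_lt1/ltW.
  have ratio_nneg := ratio_ge0 _ hc.
  by split; lra.
case: (eqVneq c cs.+1) => [-> | c_ne_pivot].
  rewrite sol_m_pivot ?(leqW M_cs) //.
  (* [lra] does not use section hypotheses, hence the local copy of [S_le1]. *)
  have S_ge0 := head_sum_ge0; have S_le1' := S_le1; have demand := pivot_demand.
  by split; lra.
by rewrite sol_m_tail //; [rewrite subr0 mulr1; split; lra | lia].
Qed.

Definition dual_mu := (1 + r cs.+1) / (1 + r M).
Definition dual_T := 1 + r cs.+1 - dual_mu.
Definition dual_K c :=
  if (c < M)%N then r c - dual_T
  else if (c <= cs)%N then r c * (r c - r cs.+1) / (1 + r c)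
  else 0.

Lemma rhoc_M_gt0 : 0 < r M.
Proof. by apply: rhoc_gt0; have := M_le_cs; lia. Qed.

Lemma dual_mu_gap : dual_mu * (1 + r M) = 1 + r cs.+1.
Proof. by have rM_gt0 := rhoc_M_gt0; rewrite mulfVK // gt_eqF //; lra. Qed.

Lemma dual_mu_ge0 : 0 <= dual_mu.
Proof.
have rM_gt0 := rhoc_M_gt0; have r'_gt0 : 0 < r cs.+1 by apply: rhoc_gt0; lia.
by rewrite divr_ge0 //; lra.
Qed.

Lemma dual_mu_le1 : dual_mu <= 1.
Proof.
have rM_gt0 := rhoc_M_gt0.
have r'_le_rM : r cs.+1 <= r M by apply: rhoc_noninc; have := M_le_cs; lia.
by rewrite ler_pdivrMr; lra.
Qed.

Lemma dual_bound c : (1 <= c <= C)%N -> forall a b d : R, opt2_box (r c) a b d ->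
  r c * a + d <= dual_K c + dual_mu * b + dual_T * a.
Proof.
move=> hc; have M_cs := M_le_cs.
have mu_ge0 := dual_mu_ge0; have mu_le1 := dual_mu_le1.
have mu_scale_ge (c' : nat) (le_rM : r M <= r c') :
    1 + r cs.+1 <= dual_mu * (1 + r c').
  by rewrite -dual_mu_gap ler_wpM2l // lerD2l.
have mu_scale_le (c' : nat) (rM_le : r c' <= r M) :
    dual_mu * (1 + r c') <= 1 + r cs.+1.
  by rewrite -dual_mu_gap ler_wpM2l // lerD2l.
rewrite /dual_K /dual_T; case: ifP => [c_lt_M | /negbT M_le_c].
  have gap : 1 + r cs.+1 <= dual_mu * (1 + r c) by apply/mu_scale_ge/rhoc_noninc; lia.
  move=> a b d [[_ a_le1] _ _ d_le_b d_le_demand].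
  exact: content_bound_cached mu_ge0 mu_le1 gap a_le1 d_le_b d_le_demand.
case: ifP => [c_le_cs | /negbT cs_lt_c].
  have r_gt0 := rhoc_gt0 _ hc.
  have r'_ge0 : 0 <= r cs.+1 by apply/ltW/rhoc_gt0; lia.
  have r'_le_r : r cs.+1 <= r c by apply: rhoc_noninc; lia.
  have gap : dual_mu * (1 + r c) <= 1 + r cs.+1 by apply/mu_scale_le/rhoc_noninc; lia.
  move=> a b d [_ [_ b_le_a] _ d_le_b d_le_demand].
  exact: content_bound_partial r_gt0 r'_ge0 r'_le_r gap b_le_a d_le_b d_le_demand.
have r_le_r' : r c <= r cs.+1 by apply: rhoc_noninc; lia.
move=> a b d [[a_ge0 _] [_ b_le_a] _ d_le_b _].
exact: content_bound_uncached mu_le1 r_le_r' a_ge0 b_le_a d_le_b.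
Qed.

Lemma dual_tight c : (1 <= c <= C)%N ->
  r c * m_sol c + lx_sol c = dual_K c + dual_mu * lx_sol c + dual_T * m_sol c.
Proof.
move=> hc; have M_cs := M_le_cs; rewrite /dual_K /dual_T.
case: ifP => [c_lt_M | /negbT M_le_c].
  by rewrite sol_m_head ?sol_lx_head //; ring.
rewrite -leqNgt in M_le_c; rewrite sol_lx_eq_m //.
case: ifP => [c_le_cs | /negbT cs_lt_c].
  have r_gt0 := rhoc_gt0 _ hc.
  by rewrite sol_m_mid ?M_le_c //; move: dual_mu => mu; field; lra.
rewrite -ltnNge in cs_lt_c; case: (eqVneq c cs.+1) => [-> | c_ne_pivot].
  by rewrite sol_m_pivot ?(leqW M_cs) //; move: dual_mu => mu; ring.
by rewrite sol_m_tail //; [ring | lia].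
Qed.

End Opt2Solution.

Theorem theorem2 (R : realFieldType) (C : nat) (nu : nat -> R) (rho : R)
  (M cs : nat)
  (hnu_mono : forall c : nat, (1 <= c)%N -> (c < C)%N -> nu c.+1 <= nu c)
  (hnu_pos : forall c : nat, (1 <= c <= C)%N -> 0 < nu c)
  (hnu_sum : \sum_(1 <= c < C.+1) nu c = 1)
  (hrho : 0 < rho)
  (hM : (1 <= M)%N)
  (hcs : (cs < C)%N)
  (hcs_le : \sum_(M <= c < cs.+1) rhoc rho nu c / (1 + rhoc rho nu c) <= 1)
  (hcs_gt : 1 < \sum_(M <= c < cs.+2) rhoc rho nu c / (1 + rhoc rho nu c)) :
  opt2_optimal C rho nu M (sol_m rho nu M cs) (sol_lx rho nu M cs)
    (sol_lx rho nu M cs).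
Proof.
apply: (@opt2_optimal_of_dual R C rho nu M _ _ _ (dual_K R nu rho M cs)
  (dual_mu R nu rho M cs) (dual_T R nu rho M cs)).
- exact: (@dual_mu_ge0 R C).
- exact: (@sol_feasible R C).
- exact: (@sol_lx_sum R C).
- exact: (@dual_bound R C).
- exact: (@dual_tight R C).
Qed.
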